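(* Let $I$ be an instance and let $\sigma$ and $\sigma'$ be two maximal $I$-feasible sequences (i.e. $I$-feasible sequences admitting no $I$-feasible one-event extension). Then $\sigma$ and $\sigma'$ contain the same set of events.
   Context: An instance $I$ consists of finite disjoint sets $R$ (residents) and $H$ (hospitals), a positive integer quota $q_h$ for each $h\in H$, for each $r\in R$ a preference list of $r$ (a sequence of distinct members of $H$, not necessarily all), and for each $h\in H$ a preference list of $h$ (a sequence of distinct members of $R$). A match is a pair $(r,h)\in R\times H$. For a set $M$ of matches, $\mathrm{res}_h M=\{r:(r,h)\in M\}$, $\mathrm{res}\,M=\{r:(r,h)\in M\text{ for some }h\}$. An event is $(r,h)^+$ (proposal) or $(r,h)^-$ (rejection). For an event sequence $\sigma$, $\mathrm{prop}(\sigma)$, $\mathrm{rej}(\sigma)$ are the sets of matches proposed/rejected in $\sigma$ and $\mathrm{tent}(\sigma)=\mathrm{prop}(\sigma)\setminus\mathrm{rej}(\sigma)$. A match $(r,h)\in M$ is ousted from $M$ in $I$ if the list of $h$ in $I$ contains at least $q_h$ residents of $\mathrm{res}_h M$ and either $r$ is not on it or $r$ is preceded on it by at least $q_h$ residents of $\mathrm{res}_h M$. $I$-feasible sequences are defined inductively: the empty sequence is $I$-feasible; if $\sigma$ is $I$-feasible then $\sigma+(r,h)^+$ is $I$-feasible if $r\notin\mathrm{res}\,\mathrm{tent}(\sigma)$, $(r,h)\notin\mathrm{prop}(\sigma)$, $h$ is on the list of $r$ in $I$ and $(r,h')\in\mathrm{rej}(\sigma)$ for every $h'$ preceding $h$ on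 it; and $\sigma+(r,h)^-$ is $I$-feasible if $(r,h)$ is ousted from $\mathrm{prop}(\sigma)$ in $I$ and $(r,h)\notin\mathrm{rej}(\sigma)$. *)

From mathcomp Require Import all_boot.
Set Implicit Arguments. Unset Strict Implicit. Unset Printing Implicit Defensive.

Record instance (R H : finType) := Instance {
  quota : H -> nat;
  quota_pos : forall h, 0 < quota h;
  rpref : R -> seq H;
  rpref_uniq : forall r, uniq (rpref r);
  hpref : H -> seq R;
  hpref_uniq : forall h, uniq (hpref h)
}.

Section Defs.
Variables (R H : finType).

(* A match is a pair (r,h). An event is (true, m) = proposal m^+,
   (false, m) = rejection m^-. *)
Definition match_t := (R * H)%type.
Definition event := (bool * match_t)%type.
Definition propE (m : match_t) : event := (true, m).
Definition rejE (m : match_t) : event := (false, m).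

Definition prop (s : seq event) : {set match_t} := [set m | propE m \in s].
Definition rej (s : seq event) : {set match_t} := [set m | rejE m \in s].
Definition tent (s : seq event) : {set match_t} := prop s :\: rej s.

Definition res_at (M : {set match_t}) (h : H) : {set R} := [set r | (r, h) \in M].
Definition res (M : {set match_t}) : {set R} := [set r | [exists h, (r, h) \in M]].

Definition ousted (I : instance R H) (M : {set match_t}) (r : R) (h : H) : bool :=
  let L := hpref I h in
  let c := fun s : seq R => count (fun r' => r' \in res_at M h) s in
  [&& (r, h) \in M, quota I h <= c L &
      (r \notin L) || (quota I h <= c (take (index r L) L))].

Inductive feasible (I : instance R H) : seq event -> Prop :=
| feasible_nil : feasible I [::]
| feasible_prop (s : seq event) (r : R) (h : H) :
    feasible I s ->
    r \notin res (tent s) ->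
    (r, h) \notin prop s ->
    h \in rpref I r ->
    (forall h', h' \in take (index h (rpref I r)) (rpref I r) -> (r, h') \in rej s) ->
    feasible I (rcons s (propE (r, h)))
| feasible_rej (s : seq event) (r : R) (h : H) :
    feasible I s ->
    ousted I (prop s) r h ->
    (r, h) \notin rej s ->
    feasible I (rcons s (rejE (r, h))).

Definition maximal_feasible (I : instance R H) (s : seq event) : Prop :=
  feasible I s /\ forall e : event, ~ feasible I (rcons s e).

End Defs.

From mathcomp Require Import all_boot.

(* Feasibility is monotone in the data a maximal sequence accumulates: an
   ousting only gets easier as the proposal set grows, and a proposal stays
   admissible as long as the resident is free.  So, replaying any feasible
   [s] event by event, each event of [s] must already occur in a maximal [s'],
   or else it would be a feasible one-event extension of [s'].  The only
   delicate point is that the proposing resident [r] is free in [s']: by the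
   preference-order invariant, a tentative (r,h'') of [s'] with h'' above
   [h] was rejected, and with h'' below [h] it forces (r,h) to be rejected,
   hence proposed, in [s']. *)

Section Feasible.
Variables (R H : finType) (I : instance R H).
Implicit Types (s : seq (event R H)) (r : R) (h : H).

Lemma mem_prop_rcons s e m :
  (m \in prop (rcons s e)) = (propE m == e) || (m \in prop s).
Proof. by rewrite !inE mem_rcons inE. Qed.

Lemma mem_rej_rcons s e m :
  (m \in rej (rcons s e)) = (rejE m == e) || (m \in rej s).
Proof. by rewrite !inE mem_rcons inE. Qed.

Lemma feasible_rej_subset {s} : feasible I s -> rej s \subset prop s.
Proof.
elim=> [|t r h _ IH _ _ _ _|t r h _ IH ous _]; first by apply/subsetP=> m; rewrite inE.
- apply/subsetP=> m; rewrite mem_rej_rcons mem_prop_rcons /= => /(subsetP IH) ->.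
  by rewrite orbT.
- apply/subsetP=> m; rewrite mem_rej_rcons mem_prop_rcons /=.
  case/orP=> [/eqP [->]|/(subsetP IH) //].
  by case/and3P: ous.
Qed.

Lemma feasible_prop_pref {s r h} : feasible I s -> (r, h) \in prop s ->
  forall h', h' \in take (index h (rpref I r)) (rpref I r) -> (r, h') \in rej s.
Proof.
move=> fs; elim: fs r h => [|t r h _ IH _ _ _ hpre|t r h _ IH _ _] r' h';
  first by rewrite inE.
- rewrite mem_prop_rcons => /orP [/eqP [-> ->]|/IH pre] h0;
    [move/hpre | move/pre]; by rewrite mem_rej_rcons => ->; rewrite orbT.
- by rewrite mem_prop_rcons => /IH pre h0 /pre; rewrite mem_rej_rcons => ->; rewrite orbT.
Qed.

Lemma feasible_prop_rpref {s r h} : feasible I s -> (r, h) \in prop s ->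
  h \in rpref I r.
Proof.
elim=> [|t r' h' _ IH _ _ hin _|t r' h' _ IH _ _]; first by rewrite inE.
- by rewrite mem_prop_rcons => /orP [/eqP [-> ->]|/IH].
- by rewrite mem_prop_rcons => /IH.
Qed.

Lemma ousted_subset (M M' : {set match_t R H}) r h :
  M \subset M' -> ousted I M r h -> ousted I M' r h.
Proof.
move=> /subsetP sMM' /and3P [inM q_all q_pre].
have count_le l : count [in res_at M h] l <= count [in res_at M' h] l.
  by apply: sub_count => x; rewrite !inE => /sMM'.
apply/and3P; split; first exact: sMM'.
  exact: leq_trans q_all (count_le _).
by case/orP: q_pre => [->//|q_pre]; rewrite (leq_trans q_pre (count_le _)) orbT.
Qed.

Lemma feasible_free {s r h} : feasible I s ->
  h \in rpref I r -> (r, h) \notin prop s ->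
  (forall h', h' \in take (index h (rpref I r)) (rpref I r) -> (r, h') \in rej s) ->
  r \notin res (tent s).
Proof.
move=> fs hin nprop pre; apply/negP; rewrite inE => /existsP [h''].
rewrite inE => /andP [nrej prop''].
have hin'' := feasible_prop_rpref fs prop''.
have [lt|gt|eq] := ltngtP (index h'' (rpref I r)) (index h (rpref I r)).
- by move: nrej; rewrite pre // in_take.
- have rej_h : (r, h) \in rej s 
    by apply: (feasible_prop_pref fs prop''); rewrite in_take.
  by move: (subsetP (feasible_rej_subset fs) _ rej_h); rewrite (negbTE nprop).
- have h''E : h'' = h by apply: (index_inj h hin'' hin).
  by move: prop''; rewrite h''E (negbTE nprop).
Qed.

Lemma feasible_subset_maximal s s' :
  feasible I s -> maximal_feasible I s' -> {subset s <= s'}.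
Proof.
move=> fs [fs' not_ext].
elim: fs => [//|t r h _ IH _ _ hin hpre|t r h _ IH ous _] e;
  rewrite mem_rcons inE => /orP [/eqP ->|/IH //];
  apply/negPn/negP => notin.
- have pre' h' : h' \in take (index h (rpref I r)) (rpref I r) -> (r, h') \in rej s'.
    by move/hpre; rewrite !inE => /IH.
  have nprop : (r, h) \notin prop s' by rewrite inE.
  apply: (not_ext (propE (r, h))).
  by apply: feasible_prop; rewrite ?(feasible_free fs' hin nprop pre').
- apply: (not_ext (rejE (r, h))); apply: feasible_rej; rewrite ?inE //.
  by apply: ousted_subset ous; apply/subsetP => m; rewrite !inE => /IH.
Qed.

End Feasible.

Theorem proposition2 (R H : finType) (I : instance R H) (s s' : seq (event R H)) :
  maximal_feasible I s -> maximal_feasible I s' ->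
  forall e : event R H, (e \in s) = (e \in s').
Proof.
move=> ms ms' e; apply/idP/idP.
- exact: feasible_subset_maximal (proj1 ms) ms' e.
- exact: feasible_subset_maximal (proj1 ms') ms e.
Qed.
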